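(* For $K>K^*:=\frac{b\sigma_1}{b-\mu_0}$ let $G_3(K)=(S(K),I_1(K),0,0,R(K))$ be the unique equilibrium of the system below with $S,I_1,R>0$. Then $K\mapsto R(K)$ and $K\mapsto I_1(K)$ are strictly increasing, $K\mapsto S(K)$ is strictly decreasing, $R(K)\to0$, $I_1(K)\to0$ and $S(K)\to\sigma_1$ as $K\downarrow K^*$, and for all $K>K^*$ $$0<I_1(K)<\frac{\mu_4'-\mu_0}{\alpha_1},\qquad \frac{\mu_1-\mu_4'}{\alpha_1}<S(K)<\frac{\mu_1-\mu_0}{\alpha_1}.$$
   Context: Consider, for $t\ge0$, the system $S'=\big(b(1-\tfrac{N}{K})-\alpha_1I_1-\alpha_2I_2-(\beta_1+\beta_2+\alpha_3)I_{12}-\mu_0\big)S$, $I_1'=\big(b(1-\tfrac{N}{K})+\alpha_1S-\eta_1I_{12}-\gamma_1I_2-\mu_1\big)I_1+\beta_1SI_{12}$, $I_2'=\big(b(1-\tfrac{N}{K})+\alpha_2S-\eta_2I_{12}-\gamma_2I_1-\mu_2\big)I_2+\beta_2SI_{12}$, $I_{12}'=\big(b(1-\tfrac{N}{K})+\alpha_3S+\eta_1I_1+\eta_2I_2-\mu_3\big)I_{12}+(\gamma_1+\gamma_2)I_1I_2$, $R'=\big(b(1-\tfrac{N}{K})-\mu_4'\big)R+\rho_1I_1+\rho_2I_2+\rho_3I_{12}$, where $N=S+I_1+I_2+I_{12}+R$. All parameters $b,K,\alpha_i,\beta_i,\gamma_i,\eta_i,\rho_i,\mu_0,\mu_i'$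 are positive and $\mu_i=\rho_i+\mu_i'$ for $i=1,2,3$; $K$ is regarded as a varying parameter, the others fixed. Standing assumptions: $b>\mu_0$, $b>\mu_i$ ($i=1,2,3$), $b>\mu_4'$, and $\mu_0<\mu_4'<\mu_j'$ for $j=1,2,3$. Set $\sigma_k=(\mu_k-\mu_0)/\alpha_k$ ($k=1,2,3$), assumed to satisfy $\sigma_1<\sigma_2<\sigma_3$, and $S^{**}=\frac{K}{b}(b-\mu_0)$. *)

From Stdlib Require Import Reals.
From Coquelicot Require Import Coquelicot.
Open Scope R_scope.

Record params := Params {
  b : R; alpha1 : R; alpha2 : R; alpha3 : R;
  beta1 : R; beta2 : R; gamma1 : R; gamma2 : R; eta1 : R; eta2 : R;
  rho1 : R; rho2 : R; rho3 : R;
  mu0 : R; mu1' : R; mu2' : R; mu3' : R; mu4' : R }.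

Definition mu1 (p : params) := rho1 p + mu1' p.
Definition mu2 (p : params) := rho2 p + mu2' p.
Definition mu3 (p : params) := rho3 p + mu3' p.

Definition sigma1 (p : params) := (mu1 p - mu0 p) / alpha1 p.
Definition sigma2 (p : params) := (mu2 p - mu0 p) / alpha2 p.
Definition sigma3 (p : params) := (mu3 p - mu0 p) / alpha3 p.

Definition standing (p : params) : Prop :=
  0 < b p /\ 0 < alpha1 p /\ 0 < alpha2 p /\ 0 < alpha3 p /\
  0 < beta1 p /\ 0 < beta2 p /\ 0 < gamma1 p /\ 0 < gamma2 p /\
  0 < eta1 p /\ 0 < eta2 p /\ 0 < rho1 p /\ 0 < rho2 p /\ 0 < rho3 p /\
  0 < mu0 p /\ 0 < mu1' p /\ 0 < mu2' p /\ 0 < mu3' p /\ 0 < mu4' p /\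
  mu0 p < b p /\ mu1 p < b p /\ mu2 p < b p /\ mu3 p < b p /\ mu4' p < b p /\
  mu0 p < mu4' p /\ mu4' p < mu1' p /\ mu4' p < mu2' p /\ mu4' p < mu3' p /\
  sigma1 p < sigma2 p /\ sigma2 p < sigma3 p.

Definition logis (p : params) (K S I1 I2 I12 Rr : R) : R :=
  b p * (1 - (S + I1 + I2 + I12 + Rr) / K).

Definition fS (p : params) (K S I1 I2 I12 Rr : R) : R :=
  (logis p K S I1 I2 I12 Rr - alpha1 p * I1 - alpha2 p * I2
   - (beta1 p + beta2 p + alpha3 p) * I12 - mu0 p) * S.

Definition fI1 (p : params) (K S I1 I2 I12 Rr : R) : R :=
  (logis p K S I1 I2 I12 Rr + alpha1 p * S - eta1 p * I12 - gamma1 p * I2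
   - mu1 p) * I1 + beta1 p * S * I12.

Definition fI2 (p : params) (K S I1 I2 I12 Rr : R) : R :=
  (logis p K S I1 I2 I12 Rr + alpha2 p * S - eta2 p * I12 - gamma2 p * I1
   - mu2 p) * I2 + beta2 p * S * I12.

Definition fI12 (p : params) (K S I1 I2 I12 Rr : R) : R :=
  (logis p K S I1 I2 I12 Rr + alpha3 p * S + eta1 p * I1 + eta2 p * I2
   - mu3 p) * I12 + (gamma1 p + gamma2 p) * I1 * I2.

Definition fR (p : params) (K S I1 I2 I12 Rr : R) : R :=
  (logis p K S I1 I2 I12 Rr - mu4' p) * Rr
  + rho1 p * I1 + rho2 p * I2 + rho3 p * I12.

Definition is_equilibrium (p : params) (K S I1 I2 I12 Rr : R) : Prop :=
  fS p K S I1 I2 I12 Rr = 0 /\ fI1 p K S I1 I2 I12 Rr = 0 /\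
  fI2 p K S I1 I2 I12 Rr = 0 /\ fI12 p K S I1 I2 I12 Rr = 0 /\
  fR p K S I1 I2 I12 Rr = 0.

Definition G3 (p : params) (K S I1 Rr : R) : Prop :=
  0 < S /\ 0 < I1 /\ 0 < Rr /\ is_equilibrium p K S I1 0 0 Rr.

Definition Kstar (p : params) : R := b p * sigma1 p / (b p - mu0 p).

From Stdlib Require Import Reals Lra Psatz.
From Coquelicot Require Import Coquelicot.
Open Scope R_scope.

(* On the face I2 = I12 = 0 the equations for S and I1 force the logistic term to be
   mu0 + alpha1 I1 and S + I1 = sigma1; the equation for R then gives R as an increasing
   function [branch_R] of x = I1 on 0 <= alpha1 x < mu4' - mu0, and the definition of the
   logistic term gives K as a function [branch_K] of x, again strictly increasing, with
   value K* at x = 0 and unbounded near the end of the interval.  So G3(K) is the unique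
   point of this branch above K, and the identity
     (b - mu0) (K - K* ) = b R + alpha1 I1 K
   bounds R and I1 linearly in K - K*. *)

Definition branch_admissible (a c B rho bb s : R) : Prop :=
  0 < a /\ 0 < c /\ c <= B /\ 0 < rho /\ 0 < bb /\ 0 < s.

Section Branch.

Context {a c B rho bb s : R}.
Hypothesis Hadm : branch_admissible a c B rho bb s.

Definition branch_R (x : R) : R := rho * x / (c - a * x).

Definition branch_K (x : R) : R := bb * (s + branch_R x) / (B - a * x).

Lemma branch_R_eq x : a * x < c -> branch_R x * (c - a * x) = rho * x.
Proof. intros; unfold branch_R; field; lra. Qed.

Lemma branch_K_eq x : B - a * x <> 0 ->
  branch_K x * (B - a * x) = bb * (s + branch_R x).
Proof. intros; unfold branch_K; field; assumption. Qed.

Lemma branch_R_ge0 x : 0 <= x -> a * x < c -> 0 <= branch_R x.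
Proof.
  pose proof Hadm as (_ & _ & _ & Hrho & _ & _).
  intros; apply Rdiv_le_0_compat; nra.
Qed.

Lemma branch_R_pos x : 0 < x -> a * x < c -> 0 < branch_R x.
Proof.
  pose proof Hadm as (_ & _ & _ & Hrho & _ & _).
  intros; apply Rdiv_lt_0_compat; nra.
Qed.

Lemma branch_R_lt x y : 0 <= x -> x < y -> a * y < c -> branch_R x < branch_R y.
Proof.
  pose proof Hadm as (Ha & _ & _ & Hrho & _ & _).
  intros Hx Hxy Hy.
  assert (Hxc : a * x < c) by nra.
  pose proof (branch_R_eq x Hxc); pose proof (branch_R_eq y Hy).
  assert (0 <= branch_R x * (a * (y - x))) by (apply Rmult_le_pos; [apply branch_R_ge0|]; nra).
  assert (branch_R x * (c - a * y) < branch_R y * (c - a * y)) by nra.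
  apply (Rmult_lt_reg_r (c - a * y)); lra.
Qed.

Lemma branch_K_pos x : 0 <= x -> a * x < c -> 0 < branch_K x.
Proof.
  pose proof Hadm as (_ & _ & HcB & _ & Hbb & Hs).
  intros Hx Hxc; pose proof (branch_R_ge0 x Hx Hxc).
  apply Rdiv_lt_0_compat; nra.
Qed.

Lemma branch_K_lt x y : 0 <= x -> x < y -> a * y < c -> branch_K x < branch_K y.
Proof.
  pose proof Hadm as (Ha & _ & HcB & _ & Hbb & _).
  intros Hx Hxy Hy.
  assert (Hxc : a * x < c) by nra.
  pose proof (branch_K_eq x ltac:(lra)); pose proof (branch_K_eq y ltac:(lra)).
  pose proof (branch_R_lt x y Hx Hxy Hy).
  assert (0 <= branch_K x * (a * (y - x))) by (apply Rmult_le_pos; [apply Rlt_le, branch_K_pos|]; nra).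
  assert (branch_K x * (B - a * y) < branch_K y * (B - a * y)) by nra.
  apply (Rmult_lt_reg_r (B - a * y)); lra.
Qed.

Lemma branch_K_lt_iff x y : 0 <= x -> 0 <= y -> a * x < c -> a * y < c ->
  branch_K x < branch_K y <-> x < y.
Proof.
  intros Hx Hy Hxc Hyc; split; [|exact (fun Hxy => branch_K_lt x y Hx Hxy Hyc)].
  intros HK; destruct (Rlt_or_le x y) as [Hxy|[Hyx|Hyx]]; [exact Hxy| |].
  - pose proof (branch_K_lt y x Hy Hyx Hxc); lra.
  - subst; lra.
Qed.

Lemma branch_K_inj x y : 0 <= x -> 0 <= y -> a * x < c -> a * y < c ->
  branch_K x = branch_K y -> x = y.
Proof.
  intros Hx Hy Hxc Hyc HK.
  destruct (Rtotal_order x y) as [Hxy|[Hxy|Hxy]]; [|exact Hxy|].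
  - apply (branch_K_lt_iff x y) in Hxy; lra.
  - apply (branch_K_lt_iff y x) in Hxy; lra.
Qed.

Lemma branch_K_excess x : a * x < c ->
  B * (branch_K x - bb * s / B) = bb * branch_R x + a * x * branch_K x.
Proof.
  pose proof Hadm as (_ & Hc & HcB & _ & _ & _).
  intros Hx; pose proof (branch_K_eq x ltac:(lra)); field_simplify; nra.
Qed.

(* [psi] is [branch_K x = K] cleared of denominators, continuous on all of [0, c/a]. *)
Lemma branch_K_onto K : bb * s / B < K -> exists x, 0 < x /\ a * x < c /\ branch_K x = K.
Proof.
  pose proof Hadm as (Ha & Hc & HcB & Hrho & Hbb & _).
  intros HK.
  set (psi x := bb * (s * (c - a * x) + rho * x) - K * (B - a * x) * (c - a * x)).
  assert (Hpsi : continuity psi).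
  { intro x; apply continuity_pt_filterlim, (ex_derive_continuous psi).
    unfold psi; auto_derive; trivial. }
  assert (HKB : bb * s < K * B).
  { apply (Rmult_lt_compat_r B) in HK; [|lra].
    replace (bb * s / B * B) with (bb * s) in HK by (field; lra); lra. }
  assert (Hca_pos : 0 < c / a) by (apply Rdiv_lt_0_compat; lra).
  assert (Hca : a * (c / a) = c) by (field; lra).
  assert (Hpsi0 : psi 0 < 0) by (unfold psi; nra).
  assert (Hpsica : 0 < psi (c / a)).
  { unfold psi; rewrite Hca, Rminus_diag; ring_simplify.
    apply Rmult_lt_0_compat; [nra|exact Hca_pos]. }
  destruct (IVT psi 0 (c / a) Hpsi Hca_pos Hpsi0 Hpsica) as [z [[Hz0 Hzca] Hz]].
  assert (Hzc : a * z < c).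
  { destruct Hzca as [Hzca|Hzca]; [|rewrite Hzca in Hz; lra].
    apply (Rmult_lt_compat_l a) in Hzca; lra. }
  exists z; split; [destruct Hz0 as [|Hz0]; [lra|subst; lra]|split; [exact Hzc|]].
  pose proof (branch_R_eq z Hzc).
  assert (HKz : K * (B - a * z) = bb * (s + branch_R z)).
  { apply (Rmult_eq_reg_r (c - a * z)); [|lra]; unfold psi in Hz; nra. }
  apply (Rmult_eq_reg_r (B - a * z)); [|lra].
  rewrite branch_K_eq by lra; lra.
Qed.

End Branch.

Lemma filterlim_at_right_of_linear_bound (f : R -> R) (k l C : R) : 0 <= C ->
  (forall x, k < x -> Rabs (f x - l) <= C * (x - k)) ->
  filterlim f (at_right k) (locally l).
Proof.
  intros HC Hf; apply filterlim_locally; intros eps.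
  assert (Hd : 0 < eps / (C + 1)) by (apply Rdiv_lt_0_compat; [apply cond_pos|lra]).
  exists (mkposreal _ Hd); intros x Hx Hkx.
  change (Rabs (x - k) < eps / (C + 1)) in Hx; rewrite Rabs_right in Hx by lra.
  change (Rabs (f x - l) < eps).
  assert (C * (x - k) <= C * (eps / (C + 1))) by (apply Rmult_le_compat_l; lra).
  assert (C * (eps / (C + 1)) = eps - eps / (C + 1)) by (field; lra).
  specialize (Hf x Hkx); lra.
Qed.

Definition recovered_at (p : params) : R -> R :=
  @branch_R (alpha1 p) (mu4' p - mu0 p) (rho1 p).

Definition capacity_at (p : params) : R -> R :=
  @branch_K (alpha1 p) (mu4' p - mu0 p) (b p - mu0 p) (rho1 p) (b p) (sigma1 p).

Section Boundary_equilibrium.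

Variable p : params.
Hypothesis Hp : standing p.

Lemma standing_admissible :
  branch_admissible (alpha1 p) (mu4' p - mu0 p) (b p - mu0 p) (rho1 p) (b p) (sigma1 p).
Proof.
  unfold standing, sigma1, mu1 in *.
  repeat split; try lra; apply Rdiv_lt_0_compat; lra.
Qed.

Lemma face_equilibrium_iff K S I Rr : 0 < S -> 0 < I ->
  is_equilibrium p K S I 0 0 Rr <->
  logis p K S I 0 0 Rr = mu0 p + alpha1 p * I /\
  alpha1 p * (S + I) = mu1 p - mu0 p /\
  Rr * (mu4' p - mu0 p - alpha1 p * I) = rho1 p * I.
Proof.
  intros HS HI; unfold is_equilibrium, fS, fI1, fI2, fI12, fR.
  set (L := logis p K S I 0 0 Rr); split.
  - intros (E1 & E2 & _ & _ & E5).
    assert (HS0 : (L - alpha1 p * I - mu0 p) * S = 0) by (rewrite <- E1; ring).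
    assert (HI0 : (L + alpha1 p * S - mu1 p) * I = 0) by (rewrite <- E2; ring).
    apply Rmult_integral in HS0 as [HS0|]; [|lra].
    apply Rmult_integral in HI0 as [HI0|]; [|lra].
    repeat split; [lra|lra|].
    replace L with (mu0 p + alpha1 p * I) in E5 by lra; lra.
  - intros (HL & HSI & HR); repeat split; rewrite ?HL; ring_simplify; nra.
Qed.

Lemma logis_face_iff K S I Rr : 0 < K -> S + I = sigma1 p ->
  logis p K S I 0 0 Rr = mu0 p + alpha1 p * I <->
  K * (b p - mu0 p - alpha1 p * I) = b p * (sigma1 p + Rr).
Proof.
  intros HK HSI.
  assert (E : logis p K S I 0 0 Rr * K = b p * K - b p * (sigma1 p + Rr)).
  { unfold logis; rewrite <- HSI; field; lra. }
  split; intros H.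
  - rewrite H in E; lra.
  - apply (Rmult_eq_reg_r K); lra.
Qed.

Lemma G3_iff K S I Rr : 0 < K ->
  G3 p K S I Rr <->
  0 < I /\ alpha1 p * I < mu4' p - mu0 p /\ S = sigma1 p - I /\
  Rr = recovered_at p I /\ K = capacity_at p I.
Proof.
  pose proof standing_admissible as Hadm.
  pose proof Hadm as (Ha & _ & HcB & Hrho & _ & _).
  assert (Hsig : alpha1 p * sigma1 p = mu1 p - mu0 p) by (unfold sigma1; field; lra).
  assert (Hm41 : mu4' p < mu1 p) by (unfold standing, mu1 in *; lra).
  intros HK; split.
  - intros (HS & HI & HR & Heq).
    apply face_equilibrium_iff in Heq as (HL & HSI & HRI); [|exact HS|exact HI].
    assert (HS' : S = sigma1 p - I) by (apply (Rmult_eq_reg_l (alpha1 p)); lra).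
    assert (HIc : alpha1 p * I < mu4' p - mu0 p) by nra.
    apply logis_face_iff in HL; [|exact HK|lra].
    assert (HR' : Rr = recovered_at p I).
    { apply (Rmult_eq_reg_r (mu4' p - mu0 p - alpha1 p * I)); [|lra].
      unfold recovered_at; rewrite branch_R_eq; lra. }
    repeat split; try assumption.
    apply (Rmult_eq_reg_r (b p - mu0 p - alpha1 p * I)); [|lra].
    unfold capacity_at; rewrite branch_K_eq by lra; rewrite HL, HR'; reflexivity.
  - intros (HI & HIc & -> & -> & ->).
    assert (Hsigma_I : 0 < sigma1 p - I) by nra.
    refine (conj Hsigma_I (conj HI (conj (branch_R_pos Hadm I HI HIc) _))).
    apply face_equilibrium_iff; [exact Hsigma_I|exact HI|].
    repeat split; [|lra|apply branch_R_eq; exact HIc].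
    apply logis_face_iff; [exact HK|ring|].
    apply branch_K_eq; lra.
Qed.

Lemma Kstar_pos : 0 < Kstar p.
Proof.
  pose proof standing_admissible as (_ & Hc & HcB & _ & Hb & Hsigma).
  unfold Kstar; apply Rdiv_lt_0_compat; nra.
Qed.

Lemma G3_exists K : Kstar p < K -> exists S I Rr, G3 p K S I Rr.
Proof.
  intros HK; pose proof Kstar_pos.
  destruct (branch_K_onto standing_admissible K HK) as (x & Hx & Hxc & HKx).
  exists (sigma1 p - x), x, (recovered_at p x).
  apply G3_iff; [lra|]; repeat split; auto.
Qed.

Lemma G3_unique K S I Rr S' I' Rr' : 0 < K ->
  G3 p K S I Rr -> G3 p K S' I' Rr' -> S = S' /\ I = I' /\ Rr = Rr'.
Proof.
  intros HK G G'.
  apply G3_iff in G as (HI & HIc & -> & -> & HKI); [|exact HK].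
  apply G3_iff in G' as (HI' & HIc' & -> & -> & HKI'); [|exact HK].
  assert (I = I') as ->; [|auto].
  apply (branch_K_inj standing_admissible); try lra.
  exact (eq_trans (eq_sym HKI) HKI').
Qed.

Lemma G3_lt K1 K2 S1 I1 R1 S2 I2 R2 : 0 < K1 -> K1 < K2 ->
  G3 p K1 S1 I1 R1 -> G3 p K2 S2 I2 R2 -> I1 < I2 /\ R1 < R2 /\ S2 < S1.
Proof.
  intros HK1 HK12 G1 G2.
  apply G3_iff in G1 as (HI1 & HIc1 & -> & -> & ->); [|exact HK1].
  apply G3_iff in G2 as (HI2 & HIc2 & -> & -> & ->); [|lra].
  assert (HI12 : I1 < I2)
    by (apply (branch_K_lt_iff standing_admissible); [lra..|exact HK12]).
  repeat split; [exact HI12| |lra].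
  apply (branch_R_lt standing_admissible); lra.
Qed.

Lemma G3_near_Kstar K S I Rr : Kstar p < K -> G3 p K S I Rr ->
  Rabs (Rr - 0) <= (b p - mu0 p) / b p * (K - Kstar p) /\
  Rabs (I - 0) <= (b p - mu0 p) / (alpha1 p * Kstar p) * (K - Kstar p) /\
  Rabs (S - sigma1 p) <= (b p - mu0 p) / (alpha1 p * Kstar p) * (K - Kstar p).
Proof.
  pose proof standing_admissible as Hadm.
  pose proof Hadm as (Ha & _ & _ & _ & Hb & _).
  pose proof Kstar_pos.
  intros HK G; pose proof G as (_ & _ & HR & _).
  apply G3_iff in G as (HI & HIc & -> & HRI & HKI); [|lra].
  assert (Hexcess : (b p - mu0 p) * (K - Kstar p) = b p * Rr + alpha1 p * I * K).
  { rewrite HKI, HRI; apply (branch_K_excess Hadm); exact HIc. }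
  rewrite Rminus_0_r, Rabs_right, Rminus_0_r, Rabs_right by lra.
  replace (sigma1 p - I - sigma1 p) with (- I) by ring; rewrite Rabs_Ropp, Rabs_right by lra.
  assert (HIK : alpha1 p * I * Kstar p <= alpha1 p * I * K) by (apply Rmult_le_compat_l; nra).
  assert (HRb : Rr <= (b p - mu0 p) / b p * (K - Kstar p)).
  { apply (Rmult_le_reg_l (b p)); [exact Hb|].
    replace (b p * ((b p - mu0 p) / b p * (K - Kstar p))) with
      ((b p - mu0 p) * (K - Kstar p)) by (field; lra); nra. }
  assert (HIb : I <= (b p - mu0 p) / (alpha1 p * Kstar p) * (K - Kstar p)).
  { apply (Rmult_le_reg_l (alpha1 p * Kstar p)); [nra|].
    replace (alpha1 p * Kstar p * ((b p - mu0 p) / (alpha1 p * Kstar p) * (K - Kstar p)))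
      with ((b p - mu0 p) * (K - Kstar p)) by (field; lra); nra. }
  auto.
Qed.

Lemma G3_bounds K S I Rr : 0 < K -> G3 p K S I Rr ->
  0 < I /\ I < (mu4' p - mu0 p) / alpha1 p /\
  (mu1 p - mu4' p) / alpha1 p < S /\ S < (mu1 p - mu0 p) / alpha1 p.
Proof.
  pose proof standing_admissible as (Ha & _).
  intros HK G; apply G3_iff in G as (HI & HIc & -> & _); [|exact HK].
  unfold sigma1.
  assert (Hgap : (mu1 p - mu0 p) / alpha1 p - (mu4' p - mu0 p) / alpha1 p
              = (mu1 p - mu4' p) / alpha1 p) by (field; lra).
  assert (I < (mu4' p - mu0 p) / alpha1 p).
  { apply (Rmult_lt_reg_l (alpha1 p)); [exact Ha|].
    replace (alpha1 p * ((mu4' p - mu0 p) / alpha1 p)) with (mu4' p - mu0 p) by (field; lra).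
    exact HIc. }
  repeat split; lra.
Qed.

End Boundary_equilibrium.

Theorem mainTheorem9 (p : params) (Hp : standing p) :
  (* G_3(K) exists and is unique for every K > K* *)
  (forall K, Kstar p < K ->
     (exists S I1 Rr, G3 p K S I1 Rr) /\
     (forall S I1 Rr S' I1' Rr', G3 p K S I1 Rr -> G3 p K S' I1' Rr' ->
        S = S' /\ I1 = I1' /\ Rr = Rr')) /\
  (* properties of K |-> G_3(K) = (S(K), I1(K), 0, 0, R(K)) *)
  (forall S I1 Rr : R -> R,
     (forall K, Kstar p < K -> G3 p K (S K) (I1 K) (Rr K)) ->
     (forall K1 K2, Kstar p < K1 -> K1 < K2 -> Rr K1 < Rr K2) /\
     (forall K1 K2, Kstar p < K1 -> K1 < K2 -> I1 K1 < I1 K2) /\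
     (forall K1 K2, Kstar p < K1 -> K1 < K2 -> S K2 < S K1) /\
     filterlim Rr (at_right (Kstar p)) (locally 0) /\
     filterlim I1 (at_right (Kstar p)) (locally 0) /\
     filterlim S (at_right (Kstar p)) (locally (sigma1 p)) /\
     (forall K, Kstar p < K ->
        0 < I1 K /\ I1 K < (mu4' p - mu0 p) / alpha1 p /\
        (mu1 p - mu4' p) / alpha1 p < S K /\
        S K < (mu1 p - mu0 p) / alpha1 p)).
Proof.
  pose proof (Kstar_pos p Hp) as HKstar.
  split.
  - intros K HK; split; [exact (G3_exists p Hp K HK)|].
    intros until Rr'; apply (G3_unique p Hp); lra.
  - intros S I Rr HG.
    assert (Hlt : forall K1 K2, Kstar p < K1 -> K1 < K2 ->
                  I K1 < I K2 /\ Rr K1 < Rr K2 /\ S K2 < S K1).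
    { intros K1 K2 HK1 HK12; apply (G3_lt p Hp K1 K2); [lra|exact HK12|apply HG; lra..]. }
    assert (Hnear := fun K HK => G3_near_Kstar p Hp K _ _ _ HK (HG K HK)).
    assert (Hcoef : 0 <= (b p - mu0 p) / b p /\
                    0 <= (b p - mu0 p) / (alpha1 p * Kstar p)).
    { pose proof (standing_admissible p Hp) as (Ha & Hc & HcB & _ & Hb & _).
      split; apply Rlt_le, Rdiv_lt_0_compat; nra. }
    split; [|split; [|split; [|split; [|split; [|split]]]]].
    + intros K1 K2 HK1 HK12; apply (Hlt K1 K2 HK1 HK12).
    + intros K1 K2 HK1 HK12; apply (Hlt K1 K2 HK1 HK12).
    + intros K1 K2 HK1 HK12; apply (Hlt K1 K2 HK1 HK12).
    + apply (filterlim_at_right_of_linear_bound _ _ _ _ (proj1 Hcoef)); apply Hnear.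
    + apply (filterlim_at_right_of_linear_bound _ _ _ _ (proj2 Hcoef)); apply Hnear.
    + apply (filterlim_at_right_of_linear_bound _ _ _ _ (proj2 Hcoef)); apply Hnear.
    + intros K HK; apply (G3_bounds p Hp K _ _ _ ltac:(lra) (HG K HK)).
Qed.
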